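(* The following hold: (1) every reduced ring is NCSUC; (2) every local ring is NCSUC; (3) if $R$ is a domain, then the upper triangular matrix ring $\mathrm{T}_2(R)$ is NCSUC; (4) for any nonzero ring $R$, the matrix ring $\mathrm{M}_2(R)$ is not NCSUC.
   Context: All rings are associative with identity $1$. For a ring $R$, $\mathrm{Id}(R)$, $U(R)$, $\mathrm{Nil}(R)$ denote the sets of idempotents, units and nilpotent elements. An element $a\in R$ is nil-clean if $a=e+q$ with $e\in \mathrm{Id}(R)$, $q\in\mathrm{Nil}(R)$. An element $a$ is uniquely strongly clean if there is exactly one $e\in\mathrm{Id}(R)$ such that $a-e\in U(R)$ and $ae=ea$. A ring is NCSUC if every nil-clean element is uniquely strongly clean. A ring is reduced if it has no nonzero nilpotent elements; a domain is a nonzero ring without zero divisors; $\mathrm{T}_2(R)$ is the ring of $2\times 2$ upper triangular matrices over $R$. *)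

From HB Require Import structures.
From mathcomp Require Import all_boot all_order all_algebra.
Set Implicit Arguments. Unset Strict Implicit. Unset Printing Implicit Defensive.
Import GRing.Theory.
Local Open Scope ring_scope.

Definition is_idem (R : pzRingType) (x : R) : Prop := x * x = x.
Definition is_nilp (R : pzRingType) (x : R) : Prop := exists n : nat, x ^+ n = 0.
Definition is_unit (R : pzRingType) (x : R) : Prop :=
  exists y : R, x * y = 1 /\ y * x = 1.

Definition nil_clean (R : pzRingType) (a : R) : Prop :=
  exists e q : R, is_idem e /\ is_nilp q /\ a = e + q.

Definition uniquely_strongly_clean (R : pzRingType) (a : R) : Prop :=
  exists! e : R, is_idem e /\ is_unit (a - e) /\ a * e = e * a.

Definition NCSUC (R : pzRingType) : Prop :=
  forall a : R, nil_clean a -> uniquely_strongly_clean a.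

Definition reduced (R : pzRingType) : Prop :=
  forall x : R, is_nilp x -> x = 0.

Definition domain (R : pzRingType) : Prop :=
  (1 : R) <> 0 /\ forall a b : R, a * b = 0 -> a = 0 \/ b = 0.

Definition left_ideal (R : pzRingType) (I : R -> Prop) : Prop :=
  [/\ I 0, (forall x y, I x -> I y -> I (x - y)) & (forall r x, I x -> I (r * x))].

Definition maximal_left_ideal (R : pzRingType) (I : R -> Prop) : Prop :=
  [/\ left_ideal I, ~ I 1 &
      forall J : R -> Prop, left_ideal J -> ~ J 1 ->
        (forall x, I x -> J x) -> forall x, J x -> I x].

Definition local_ring (R : pzRingType) : Prop :=
  exists I : R -> Prop, maximal_left_ideal I /\
    forall J : R -> Prop, maximal_left_ideal J -> forall x, J x <-> I x.

Section T2.
Variable R : nzRingType.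

Definition uptri : {pred 'M[R]_2} := fun A => A ord_max ord0 == 0.

Lemma uptri_subring_closed : subring_closed uptri.
Proof.
split.
- by rewrite /uptri unfold_in /= mxE.
- move=> A B; rewrite /uptri !unfold_in /= mxE !mxE => /eqP-> /eqP->.
  by rewrite subr0.
- move=> A B; rewrite /uptri !unfold_in /= !mxE => /eqP HA /eqP HB.
  rewrite !big_ord_recr big_ord0 /= add0r.
  have -> : (widen_ord (leqnSn 1) ord_max : 'I_2) = ord0 by apply/val_inj.
  by rewrite HA HB mul0r mulr0 addr0.
Qed.

HB.instance Definition _ := GRing.isSubringClosed.Build _ uptri
  uptri_subring_closed.

Definition T2 := {A : 'M[R]_2 | A \in uptri}.
HB.instance Definition _ := [isSub for (@proj1_sig _ _ : T2 -> 'M[R]_2)].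
HB.instance Definition _ := [Choice of T2 by <:].
HB.instance Definition _ := [SubChoice_isSubNzRing of T2 by <:].
End T2.

(* A nilpotent q is uniquely strongly clean, with idempotent 1: if f is an
   idempotent commuting with q and q - f is a unit, then (q - f)(1 - f) = q(1 - f)
   is both nilpotent and invertible in the corner ring (1 - f)R(1 - f), so f = 1.
   An idempotent e is uniquely strongly clean, with idempotent 1 - e, because
   (e - f)(1 - e - f) = fe - ef = 0.  Moreover a |-> 1 - a preserves unique strong
   cleanness.  Nil-clean elements of a reduced ring are idempotents, and those of
   a ring whose only idempotents are 0 and 1 (e.g. a local ring) are q or 1 + q
   with q nilpotent.  In T_2(R) over a domain, the diagonal of a nil-clean element
   lies in {0, 1}^2; the diagonals (0,0) and (1,1) give q and 1 - q, and the mixed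
   diagonals are settled by hand, since the unit a - f must have a unit diagonal.
   Finally a = [[1,1],[1,0]] is nil-clean in M_2(R) and a^2 = a + 1, so a and
   a - 1 are both units and 0, 1 are two distinct witnesses. *)

From HB Require Import structures.
From mathcomp Require Import all_boot all_order all_algebra.
From mathcomp Require Import boolp classical_sets.
Set Implicit Arguments. Unset Strict Implicit. Unset Printing Implicit Defensive.
Import GRing.Theory.
Local Open Scope ring_scope.

Definition trivial_idempotents (R : pzRingType) : Prop :=
  forall e : R, is_idem e -> e = 0 \/ e = 1.

Section Elements.
Variable R : pzRingType.
Implicit Types a e f q u x : R.

Lemma unit_mulIr u x : is_unit u -> u * x = 0 -> x = 0.
Proof. by move=> [v [_ vu]] ux0; rewrite -[x]mul1r -vu -mulrA ux0 mulr0. Qed.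

Lemma unit1 : is_unit (1 : R).
Proof. by exists 1; rewrite mulr1. Qed.

Lemma unitN u : is_unit u -> is_unit (- u).
Proof. by move=> [v [uv vu]]; exists (- v); rewrite !mulrNN. Qed.

Lemma unitX u n : is_unit u -> is_unit (u ^+ n).
Proof.
move=> [v [uv vu]]; have uv_comm : GRing.comm u v by rewrite /GRing.comm uv vu.
exists (v ^+ n); rewrite -!exprMn_comm ?uv ?vu ?expr1n //; exact: commr_sym.
Qed.

Lemma nilpN q : is_nilp q -> is_nilp (- q).
Proof. by move=> [n qn0]; exists n; rewrite exprNn qn0 mulr0. Qed.

Lemma nilp_unit_subr1 q : is_nilp q -> is_unit (q - 1).
Proof.
move=> [n qn0]; have geom := subrX1 q n; rewrite qn0 sub0r in geom.
have comm_sum : GRing.comm (q - 1) (\sum_(i < n) q ^+ i).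
  by apply: commr_sum => i _; apply/commrX/commr_sym/commrB; [apply: commr_refl|apply: commr1].
exists (- \sum_(i < n) q ^+ i); split; first by rewrite mulrN -geom opprK.
by rewrite mulNr -comm_sum -geom opprK.
Qed.

Lemma idem1B e : is_idem e -> is_idem (1 - e).
Proof. by rewrite /is_idem => ee; rewrite mulrBl mul1r mulrBr mulr1 ee subrr subr0. Qed.

Lemma idem_exprS e n : is_idem e -> e ^+ n.+1 = e.
Proof. by move=> ee; elim: n => // n IHn; rewrite exprS IHn ee. Qed.

Lemma usc_1B a : uniquely_strongly_clean a -> uniquely_strongly_clean (1 - a).
Proof.
have compl b f : is_idem f /\ is_unit (b - f) /\ b * f = f * b ->
    is_idem (1 - f) /\ is_unit ((1 - b) - (1 - f)) /\ (1 - b) * (1 - f) = (1 - f) * (1 - b).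
  move=> [ff [u bf]]; split; first exact: idem1B.
  have -> : (1 - b) - (1 - f) = - (b - f) by rewrite (addrC 1) addrKA opprK opprB addrC.
  split; first exact: unitN.
  apply: commrB; first exact: commr1.
  by apply/commr_sym/commrB; [exact: commr1 | exact/commr_sym].
move=> [e [ae uniq_e]]; exists (1 - e); split; first exact: compl.
by move=> f /compl; rewrite subKr => /uniq_e ->; rewrite subKr.
Qed.

Lemma idem_usc e : is_idem e -> uniquely_strongly_clean e.
Proof.
move=> ee; have e1e : e * (1 - e) = 0 by rewrite mulrBr mulr1 ee subrr.
have e1e' : (1 - e) * e = 0 by rewrite mulrBl mul1r ee subrr.
exists (1 - e); split.
  split; first exact: idem1B.
  split; last by rewrite e1e e1e'.
  exists (e - (1 - e)); split; rewrite mulrBl (mulrBr e) (mulrBr (1 - e)) e1e e1e' ee (idem1B ee);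
    by rewrite subr0 sub0r opprK addrC subrK.
move=> f [ff [u ef]].
suff /eqP : 1 - (e + f) = 0 by rewrite subr_eq0 => /eqP ->; rewrite addrC addKr.
apply: (unit_mulIr u).
by rewrite mulrBr mulr1 mulrDr !mulrBl ee ff ef subrKA subrr.
Qed.

Lemma nilp_usc q : is_nilp q -> uniquely_strongly_clean q.
Proof.
move=> nq; exists 1; split.
  by split; [rewrite /is_idem mulr1 | split; [exact: nilp_unit_subr1 | rewrite mulr1 mul1r]].
move=> f [ff [u qf]]; have [n qn0] := nq.
suff /eqP : 1 - f = 0 by rewrite subr_eq0 => /eqP.
have commB1 x : GRing.comm x f -> GRing.comm x (1 - f).
  by move=> xf; apply: commrB; [exact: commr1 | exact: xf].
have qf_g : (q - f) * (1 - f) = q * (1 - f).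
  by rewrite mulrBl (mulrBr f) mulr1 ff subrr subr0.
apply: (unit_mulIr (unitX n.+1 u)).
rewrite -(idem_exprS n (idem1B ff)) -exprMn_comm; last first.
  by apply/commB1/commr_sym/commrB; [exact/commr_sym | exact: commr_refl].
by rewrite qf_g exprMn_comm ?exprSr ?qn0 ?mul0r //; exact: commB1.
Qed.

Lemma usc_unit_subr1 a : is_unit a -> is_unit (a - 1) ->
  uniquely_strongly_clean a -> (1 : R) = 0.
Proof.
move=> ua ua1 [e [_ uniq_e]].
have <- : e = 0 by apply: uniq_e; rewrite /is_idem subr0 !mulr0 mul0r.
by apply/esym/uniq_e; rewrite /is_idem !mulr1 mul1r.
Qed.

Lemma reduced_NCSUC : reduced R -> NCSUC R.
Proof. by move=> redR a [e [q [ee [/redR -> ->]]]]; rewrite addr0; exact: idem_usc. Qed.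

Lemma nil_clean01 a : reduced R -> trivial_idempotents R -> nil_clean a -> a = 0 \/ a = 1.
Proof. by move=> redR idemR [e [q [/idemR ee [/redR -> ->]]]]; rewrite addr0. Qed.

Lemma trivial_idem_NCSUC : trivial_idempotents R -> NCSUC R.
Proof.
move=> idem01 a [e [q [/idem01 [->|->] [nq ->]]]]; first by rewrite add0r; exact: nilp_usc.
by rewrite -[q]opprK; apply/usc_1B/nilp_usc/nilpN.
Qed.
End Elements.

Section LocalRing.
Local Open Scope classical_set_scope.
Variable R : pzRingType.

Lemma left_ideal_sub_maximal (J : R -> Prop) : left_ideal J -> ~ J 1 ->
  exists2 M, maximal_left_ideal M & forall x, J x -> M x.
Proof.
move=> [J0 JB JM] J1.
(* The last clause survives unions of chains, including the empty one. *)
pose P (X : set R) := [/\ forall x y, X x -> X y -> X (x - y),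
  forall r x, X x -> X (r * x), ~ X 1 & (exists x, X x) -> J `<=` X].
have [A [[AB AM A1 AJ] Amax]] : exists A, P A /\ forall B, A `<` B -> ~ P B.
  apply: Zorn_bigcup => F FP Ftot; split.
  - move=> x y [X FX Xx] [Y FY Yy].
    have [XY|YX] := Ftot X Y FX FY.
      by exists Y => //; have [YB _ _ _] := FP Y FY; apply: YB => //; exact: XY.
    by exists X => //; have [XB _ _ _] := FP X FX; apply: XB => //; exact: YX.
  - by move=> r x [X FX Xx]; exists X => //; have [_ XM _ _] := FP X FX; exact: XM.
  - by move=> [X FX X1]; have [_ _ nX1 _] := FP X FX.
  - move=> [x [X FX Xx]] y Jy; exists X => //.
    by have [_ _ _ XJ] := FP X FX; apply: XJ => //; exists x.
have JA : J `<=` A.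
  apply: AJ; apply: contrapT => A_empty; apply: (Amax J); last by split => // _.
  split => [x Ax|/(_ 0 J0) A0]; exfalso; apply: A_empty; by [exists x | exists 0].
have A0 : A 0 by rewrite -(subrr 0); apply: AB; apply: JA.
exists A => //; split=> // I [I0 IB IM] I1 AI x Ix; apply: contrapT => nAx.
by apply: (Amax I); [split => // IA; apply: nAx; apply: IA | split => // _ y /JA /AI].
Qed.

Definition lprinc (c : R) : R -> Prop := fun x => exists r, x = r * c.

Lemma left_ideal_lprinc c : left_ideal (lprinc c).
Proof.
split.
- by exists 0; rewrite mul0r.
- by move=> x y [r ->] [s ->]; exists (r - s); rewrite mulrBl.
- by move=> r x [s ->]; exists (r * s); rewrite mulrA.
Qed.

Lemma lprinc_idem_1 (e : R) : is_idem e -> lprinc e 1 -> e = 1.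
Proof. by move=> ee [r r1]; rewrite -[e]mul1r {1}r1 -mulrA ee -r1. Qed.

Lemma local_idem (e : R) : local_ring R -> is_idem e -> e = 0 \/ e = 1.
Proof.
move=> [I [[[I0 IB _] I1 _] uniqI]] ee.
have proper_in_I (c : R) : is_idem c -> c <> 1 -> I c.
  move=> cc c1; have lc1 : ~ lprinc c 1 by move/(lprinc_idem_1 cc).
  have [M maxM] := left_ideal_sub_maximal (left_ideal_lprinc c) lc1.
  by move=> /(_ c (ex_intro _ 1 (esym (mul1r c)))) /(uniqI M maxM).
have [->|e1] := eqVneq e 1; [by right | left].
apply: contrapT => e0; apply: I1.
have Ie : I e by apply/proper_in_I/eqP.
have I1e : I (1 - e).
  by apply: (proper_in_I _ (idem1B ee)) => /(congr1 (fun x => 1 - x)); rewrite subKr subrr.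
have -> : (1 : R) = (1 - e) - (0 - e) by rewrite sub0r opprK subrK.
by apply: (IB) => //; apply: IB.
Qed.

Lemma local_NCSUC : local_ring R -> NCSUC R.
Proof. by move=> locR; apply: trivial_idem_NCSUC => e; exact: local_idem. Qed.
End LocalRing.

Section RMorphismTransfer.
Variables (R S : pzRingType) (phi : {rmorphism R -> S}).

Lemma rmorph_idem e : is_idem e -> is_idem (phi e).
Proof. by rewrite /is_idem -rmorphM => ->. Qed.

Lemma rmorph_nilp q : is_nilp q -> is_nilp (phi q).
Proof. by move=> [n qn0]; exists n; rewrite -rmorphXn qn0 rmorph0. Qed.

Lemma rmorph_unit u : is_unit u -> is_unit (phi u).
Proof. by move=> [v [uv vu]]; exists (phi v); rewrite -!rmorphM uv vu rmorph1. Qed.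

Lemma rmorph_nil_clean a : nil_clean a -> nil_clean (phi a).
Proof.
move=> [e [q [ee [nq ->]]]]; exists (phi e), (phi q).
by rewrite rmorphD; split; [exact: rmorph_idem | split; [exact: rmorph_nilp |]].
Qed.
End RMorphismTransfer.

Section Matrix2.
Variable R : nzRingType.
Local Notation i0 := (ord0 : 'I_2).
Local Notation i1 := (ord_max : 'I_2).

Definition mx2 (a b c d : R) : 'M[R]_2 :=
  \matrix_(i, j) if i == i0 then (if j == i0 then a else b) else (if j == i0 then c else d).

Lemma mx2_eta (A : 'M[R]_2) : A = mx2 (A i0 i0) (A i0 i1) (A i1 i0) (A i1 i1).
Proof.
apply/matrixP => i j; rewrite mxE.
by case: i => [[|[|//]] ?]; case: j => [[|[|//]] ?]; congr (A _ _); apply: val_inj.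
Qed.

Lemma mulmx2 a b c d a' b' c' d' : mx2 a b c d * mx2 a' b' c' d' =
  mx2 (a * a' + b * c') (a * b' + b * d') (c * a' + d * c') (c * b' + d * d').
Proof.
by rewrite [LHS]mx2_eta !mxE !big_ord_recl !big_ord0 !mxE /= !addr0.
Qed.

Lemma addmx2 a b c d a' b' c' d' :
  mx2 a b c d + mx2 a' b' c' d' = mx2 (a + a') (b + b') (c + c') (d + d').
Proof. by rewrite [LHS]mx2_eta !mxE. Qed.

Lemma oppmx2 a b c d : - mx2 a b c d = mx2 (- a) (- b) (- c) (- d).
Proof. by rewrite [LHS]mx2_eta !mxE. Qed.

Lemma mx2_1 : mx2 1 0 0 1 = 1.
Proof. by rewrite [RHS]mx2_eta !mxE. Qed.

Lemma mx2_0 : mx2 0 0 0 0 = 0.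
Proof. by rewrite [RHS]mx2_eta !mxE. Qed.
End Matrix2.

Section UpperTriangular.
Variable R : nzRingType.
Local Notation i0 := (ord0 : 'I_2).
Local Notation i1 := (ord_max : 'I_2).

Lemma mx2_uptri (a b c : R) : mx2 a b 0 c \in @uptri R.
Proof. by rewrite unfold_in /uptri mxE. Qed.

Definition tri (a b c : R) : T2 R := exist _ (mx2 a b 0 c) (mx2_uptri a b c).

Definition t11 (x : T2 R) := val x i0 i0.
Definition t12 (x : T2 R) := val x i0 i1.
Definition t22 (x : T2 R) := val x i1 i1.

Lemma tri_eta x : x = tri (t11 x) (t12 x) (t22 x).
Proof.
apply: val_inj; rewrite [LHS]mx2_eta /=; congr mx2.
by have := valP x; rewrite unfold_in => /eqP.
Qed.

Lemma T2_tri x : exists a b c, x = tri a b c.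
Proof. by exists (t11 x), (t12 x), (t22 x); exact: tri_eta. Qed.

Lemma tri_inj a b c a' b' c' : tri a b c = tri a' b' c' -> [/\ a = a', b = b' & c = c'].
Proof.
move/(congr1 val) => /= E; have entry i j : mx2 a b 0 c i j = mx2 a' b' 0 c' i j by rewrite E.
by move: (entry i0 i0) (entry i0 i1) (entry i1 i1); rewrite !mxE.
Qed.

Lemma mul_tri a b c a' b' c' :
  tri a b c * tri a' b' c' = tri (a * a') (a * b' + b * c') (c * c').
Proof. by apply: val_inj; rewrite /= mulmx2 !mul0r !mulr0 !addr0 add0r. Qed.

Lemma add_tri a b c a' b' c' :
  tri a b c + tri a' b' c' = tri (a + a') (b + b') (c + c').
Proof. by apply: val_inj; rewrite /= addmx2 addr0. Qed.

Lemma opp_tri a b c : - tri a b c = tri (- a) (- b) (- c).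
Proof. by apply: val_inj; rewrite /= oppmx2 oppr0. Qed.

Lemma tri1 : tri 1 0 1 = 1.
Proof. by apply: val_inj; rewrite /= mx2_1. Qed.

Lemma tri0 : tri 0 0 0 = 0.
Proof. by apply: val_inj; rewrite /= mx2_0. Qed.

Lemma t11_tri a b c : t11 (tri a b c) = a. Proof. by rewrite /t11 mxE. Qed.
Lemma t22_tri a b c : t22 (tri a b c) = c. Proof. by rewrite /t22 mxE. Qed.

Lemma t11_zmod_morphism : zmod_morphism t11.
Proof. by move=> x y; rewrite [x]tri_eta [y]tri_eta opp_tri add_tri !t11_tri. Qed.

Lemma t11_monoid_morphism : monoid_morphism t11.
Proof. by split=> [|x y]; [rewrite -tri1 | rewrite [x]tri_eta [y]tri_eta mul_tri]; rewrite !t11_tri. Qed.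

HB.instance Definition _ := GRing.isZmodMorphism.Build (T2 R) R t11 t11_zmod_morphism.
HB.instance Definition _ := GRing.isMonoidMorphism.Build (T2 R) R t11 t11_monoid_morphism.

Lemma t22_zmod_morphism : zmod_morphism t22.
Proof. by move=> x y; rewrite [x]tri_eta [y]tri_eta opp_tri add_tri !t22_tri. Qed.

Lemma t22_monoid_morphism : monoid_morphism t22.
Proof. by split=> [|x y]; [rewrite -tri1 | rewrite [x]tri_eta [y]tri_eta mul_tri]; rewrite !t22_tri. Qed.

HB.instance Definition _ := GRing.isZmodMorphism.Build (T2 R) R t22 t22_zmod_morphism.
HB.instance Definition _ := GRing.isMonoidMorphism.Build (T2 R) R t22 t22_monoid_morphism.
End UpperTriangular.

Lemma not_unit0 (R : nzRingType) : ~ is_unit (0 : R).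
Proof. by move=> [v [/esym]]; rewrite mul0r => /eqP; rewrite oner_eq0. Qed.

Section UpperTriangularNCSUC.
Variable R : nzRingType.

Lemma unit_tri (a b c : R) : is_unit (tri a b c) <-> is_unit a /\ is_unit c.
Proof.
split=> [u | [[a' [aa' a'a]] [c' [cc' c'c]]]].
  by split; [rewrite -(t11_tri a b c) | rewrite -(t22_tri a b c)]; exact: rmorph_unit.
exists (tri a' (- (a' * b * c')) c'); rewrite !mul_tri aa' a'a cc' c'c -tri1.
by rewrite mulrN !mulrA aa' mul1r addNr mulNr -mulrA c'c mulr1 addrN.
Qed.

Lemma tri01_usc (s : R) : trivial_idempotents R -> uniquely_strongly_clean (tri 0 s 1).
Proof.
move=> idemR; exists (tri 1 (- s) 0); split.
  rewrite /is_idem opp_tri add_tri !mul_tri unit_tri.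
  rewrite !(mul0r, mulr0, mul1r, mulr1, add0r, addr0, oppr0, opprK, subrr).
  by split=> //; split=> //; split; [exact/unitN/unit1 | exact: unit1].
move=> f [ff [u af]]; have [x [b [z fE]]] := T2_tri f.
move: u; rewrite fE opp_tri add_tri unit_tri add0r => -[ux uz].
have /idemR [x0|x1] : is_idem x by rewrite -(t11_tri x b z) -fE; exact: rmorph_idem.
  by move: ux; rewrite x0 oppr0 => /not_unit0.
have /idemR [z0|z1] : is_idem z by rewrite -(t22_tri x b z) -fE; exact: rmorph_idem.
  2: by move: uz; rewrite z1 subrr => /not_unit0.
move: af; rewrite fE x1 z0 !mul_tri => /tri_inj [_ sb _].
move: sb; rewrite !(mul0r, mulr0, mul1r, mulr1, add0r) addrC => /esym/eqP.
by rewrite addr_eq0 => /eqP ->.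
Qed.

Lemma T2_NCSUC : reduced R -> trivial_idempotents R -> NCSUC (T2 R).
Proof.
move=> redR idemR a nca; have [x [s [z aE]]] := T2_tri a.
have x01 : x = 0 \/ x = 1.
  by rewrite -(t11_tri x s z) -aE; exact/(nil_clean01 redR idemR)/rmorph_nil_clean.
have z01 : z = 0 \/ z = 1.
  by rewrite -(t22_tri x s z) -aE; exact/(nil_clean01 redR idemR)/rmorph_nil_clean.
have usc0 (s' z' : R) : z' = 0 \/ z' = 1 -> uniquely_strongly_clean (tri 0 s' z').
  case=> ->; last exact: tri01_usc s' idemR.
  by apply: nilp_usc; exists 2%N; rewrite expr2 mul_tri !(mul0r, mulr0, addr0) tri0.
have compl (x' s' z' : R) : tri x' s' z' = 1 - tri (1 - x') (- s') (1 - z').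
  by rewrite -tri1 opp_tri add_tri !subKr sub0r opprK.
rewrite aE; case: x01 => ->; first exact: usc0.
rewrite compl subrr; apply/usc_1B/usc0.
by case: z01 => ->; rewrite ?subr0 ?subrr; [right | left].
Qed.
End UpperTriangularNCSUC.

Section Domain.
Variable R : pzRingType.
Hypothesis domR : domain R.

Lemma domain_reduced : reduced R.
Proof.
have [nz1 zdiv] := domR; move=> q [n]; elim: n => [|n IHn]; first by rewrite expr0 => /nz1.
by rewrite exprS => /zdiv [|/IHn].
Qed.

Lemma domain_trivial_idempotents : trivial_idempotents R.
Proof.
move=> e ee; have [_ zdiv] := domR.
have : e * (e - 1) = 0 by rewrite mulrBr mulr1 ee subrr.
by move/zdiv => [->|/eqP]; [left | rewrite subr_eq0 => /eqP ->; right].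
Qed.
End Domain.

Lemma M2_not_NCSUC (R : nzRingType) : ~ NCSUC 'M[R]_2.
Proof.
pose a := mx2 1 1 1 (0 : R).
have nca : nil_clean a.
  exists (mx2 1 0 1 0), (mx2 0 1 0 0); split; [|split].
  - by rewrite /is_idem mulmx2 !(mulr0, mul0r, mulr1, addr0).
  - by exists 2%N; rewrite expr2 mulmx2 !(mulr0, mul0r, addr0) mx2_0.
  - by rewrite addmx2 !(addr0, add0r).
have fib : a * a = a + 1.
  by rewrite -mx2_1 mulmx2 addmx2 !(mulr0, mul0r, mulr1, addr0, add0r).
have fibB : a * a - a = 1 by rewrite fib addrC addKr.
have ua : is_unit a by exists (a - 1); rewrite mulrBr mulrBl mulr1 mul1r fibB.
have ua1 : is_unit (a - 1) by exists a; rewrite mulrBr mulrBl mulr1 mul1r fibB.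
by move=> /(_ a nca) /(usc_unit_subr1 ua ua1) /eqP; rewrite oner_eq0.
Qed.

Theorem mainTheorem19 :
  [/\ (forall R : pzRingType, reduced R -> NCSUC R),
      (forall R : pzRingType, local_ring R -> NCSUC R),
      (forall R : nzRingType, domain R -> NCSUC (T2 R))
    & (forall R : nzRingType, ~ NCSUC 'M[R]_2)].
Proof.
split.
- exact: reduced_NCSUC.
- exact: local_NCSUC.
- move=> R domR; apply: T2_NCSUC; [exact: domain_reduced | exact: domain_trivial_idempotents].
- exact: M2_not_NCSUC.
Qed.
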